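(* For any subsets $I,J\subseteq\{1,\dots,n\}$, there are signs $\epsilon(I,J,R)\in\{\pm1\}$ such that \[ \beta(e_I,e_J)=2^{|I\cap J|}\sum_{R\subseteq I\Delta J}\epsilon(I,J,R)\, e_{I\cap J}\wedge e_R\wedge f_{I^c\cap J^c}\wedge f_R , \] where $I\Delta J=(I\setminus J)\cup(J\setminus I)$ and $I^c$ denotes the complement of $I$ in $\{1,\dots,n\}$.
   Context: Let $V$ be a complex vector space of dimension $2n$ with a nondegenerate symmetric bilinear form $q$, and $V=E\oplus F$ with $E,F$ maximal isotropic, with bases $e_1,\dots,e_n$ of $E$ and $f_1,\dots,f_n$ of $F$ such that $q(e_i,f_j)=\delta_{ij}$. For $v\in V$ let $o(v)$ be exterior multiplication by $v$ on $\wedge V$ and $i(v)$ the contraction $i(v)(v_1\wedge\cdots\wedge v_k)=\sum_j(-1)^{j-1}q(v,v_j)v_1\wedge\cdots\widehat{v_j}\cdots\wedge v_k$; set $\psi(v)=o(v)+i(v)$. The Clifford algebra $Cl(V)$ is the tensor algebra of $V$ modulo $v\otimes w+w\otimes v=2q(v,w)1$; $\psi$ extends to an algebra map $Cl(V)\to\mathrm{End}(\wedge V)$ and $\theta:Cl(V)\to\wedge V$, $x\mapsto\psi(x)\cdot 1$, is a linear isomorphism; we identify $Cl(V)$ with $\wedge V$ through $\theta$. In particular $Cl(E)\subset Cl(V)$ is identified with $\wedge E$ (a product $e_{i_1}\cdots e_{i_k}$ of distinct basis vectors of $E$ corresponds to $e_{i_1}\wedge\cdots\wedge e_{i_k}$).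 For $I=\{i_1<\dots<i_k\}$ write $e_I=e_{i_1}\wedge\cdots\wedge e_{i_k}$, $f_I=f_{i_1}\wedge\cdots\wedge f_{i_k}$ (equal to the corresponding Clifford products). Let $f=f_1f_2\cdots f_n\in Cl(V)$, and let $\alpha$ be the main anti-automorphism of $Cl(V)$, the unique algebra anti-automorphism restricting to the identity on $V$ (so $\alpha(v_1\cdots v_r)=v_r\cdots v_1$). For $u,v\in\wedge E\subset Cl(V)$ define $\beta(u,v)=\theta(u\,f\,\alpha(v))\in\wedge V$. *)

(* Concrete model of the exterior algebra /\V, V = E (+) F,
   dim V = 2n, with coefficients in algC (algebraic complex numbers). *)
From HB Require Import structures.
From mathcomp Require Import all_boot all_order all_algebra all_field.
Set Implicit Arguments. Unset Strict Implicit. Unset Printing Implicit Defensive.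
Import Order.TTheory GRing.Theory Num.Theory.
Local Open Scope ring_scope.

(* Basis of V indexed by 'I_(n+n): lshift n i = e_(i+1), rshift n i = f_(i+1);
   the ordering e_1 < ... < e_n < f_1 < ... < f_n is used for monomials. *)
Definition eidx n (i : 'I_n) : 'I_(n + n) := lshift n i.
Definition fidx n (i : 'I_n) : 'I_(n + n) := rshift n i.

(* /\V : coefficient functions on the monomial basis e_A, A a subset of the
   basis, written in increasing order. *)
Notation ext n := {ffun {set 'I_(n + n)} -> algC}.

Definition sc n (c : algC) (x : ext n) : ext n := [ffun B => c * x B].

Definition mono n (A : {set 'I_(n + n)}) : ext n := [ffun B => (B == A)%:R].

(* e_A /\ e_B = wsign A B * e_(A u B) *)
Definition wsign n (A B : {set 'I_(n + n)}) : algC :=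
  if [disjoint A & B]
  then (-1) ^+ #|[set p in setX A B | (val p.2 < val p.1)%N]|
  else 0.

Definition wedge n (x y : ext n) : ext n :=
  \sum_(A : {set 'I_(n + n)}) \sum_(B : {set 'I_(n + n)})
     sc (x A * y B * wsign A B) (mono (A :|: B)).

Definition vec n (k : 'I_(n + n)) : ext n := mono [set k].

(* The bilinear form q on basis vectors: q(e_i,f_j) = q(f_j,e_i) = delta_ij,
   q(e_i,e_j) = q(f_i,f_j) = 0. *)
Definition partner n (k : 'I_(n + n)) : 'I_(n + n) :=
  match split k with inl j => rshift n j | inr j => lshift n j end.
Definition qb n (k a : 'I_(n + n)) : algC := (partner k == a)%:R.

(* contraction i(b_k): i(v)(v_1/\.../\v_m) = sum_j (-1)^(j-1) q(v,v_j) ...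
   (position j-1 of a in increasing A = number of elements of A below a) *)
Definition contr n (k : 'I_(n + n)) (x : ext n) : ext n :=
  \sum_(A : {set 'I_(n + n)}) sc (x A)
     (\sum_(a in A) sc (((-1) ^+ #|[set b in A | (val b < val a)%N]|) * qb k a)
                        (mono (A :\ a))).

Definition psi n (k : 'I_(n + n)) (x : ext n) : ext n :=
  wedge (vec k) x + contr k x.

(* psi(v_1 v_2 ... v_m) x = psi(v_1)(psi(v_2)(...(psi(v_m) x))) *)
Definition psi_seq n (s : seq 'I_(n + n)) (x : ext n) : ext n :=
  foldr (fun k y => psi k y) x s.

Definition one_ext n : ext n := mono set0.

(* e_S and f_S in /\V (elements listed in increasing order) *)
Definition eS n (S : {set 'I_n}) : ext n := mono (@eidx n @: S).
Definition fS n (S : {set 'I_n}) : ext n := mono (@fidx n @: S).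

(* beta(e_I, e_J) = theta(e_I f alpha(e_J)) = psi(e_I f alpha(e_J)) . 1, where
   e_I = e_(i1)...e_(ik) (Clifford product, i1<...<ik), f = f_1...f_n and
   alpha(e_J) = e_(jl)...e_(j1). *)
Definition beta_e n (I J : {set 'I_n}) : ext n :=
  psi_seq (map (@eidx n) (enum I))
    (psi_seq (map (@fidx n) (enum [set: 'I_n]))
      (psi_seq (rev (map (@eidx n) (enum J))) (one_ext n))).

From HB Require Import structures.
From mathcomp Require Import all_boot all_order all_algebra all_field.
Set Implicit Arguments. Unset Strict Implicit. Unset Printing Implicit Defensive.
Import Order.TTheory GRing.Theory Num.Theory.
Local Open Scope ring_scope.

(* Two facts drive the computation:
   - psi(b_k) and psi(b_l) anticommute as soon as b_k, b_l belong to different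
     hyperbolic planes <e_i, f_i> (lemma [psi_anti]); hence the word may be
     sorted plane by plane at the cost of a global sign ([reorder]);
   - the letters of plane i form the block e_i f_i e_i (i in I and J),
     e_i f_i (i in I only), f_i e_i (i in J only) or f_i (i in neither), and
     on a monomial not involving e_i, f_i such a block acts by
     2 e_i /\ _, by e_i /\ f_i /\ _ + id, or by f_i /\ _, up to signs.
   An induction on m ([partial_form_prefix]) therefore shows that the blocks
   of the planes i < m, applied to 1, produce
   2^|I n J n [0,m)| sum_(R c (I Delta J) n [0,m)) +- e_(K u R) f_(L u R),
   with K = I n J, L = I^c n J^c cut at m.  For m = n this is the statement,
   once each monomial is rewritten as the wedge product e_K/\e_R/\f_L/\f_R
   up to sign ([wedge_chain]). *)

Definition is_sign (R : pzRingType) (c : R) := c = 1 \/ c = -1.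

Lemma is_sign_exp (R : pzRingType) t : is_sign ((-1) ^+ t : R).
Proof.
by rewrite /is_sign -signr_odd; case: (odd t); [right; rewrite expr1|left; rewrite expr0].
Qed.

Lemma is_signM (R : pzRingType) (a b : R) : is_sign a -> is_sign b -> is_sign (a * b).
Proof.
by case=> ->; case=> ->; rewrite ?mul1r ?mulN1r ?opprK; [left|right|right|left].
Qed.

Lemma is_signK (R : pzRingType) (a : R) : is_sign a -> a * a = 1.
Proof. by case=> ->; rewrite ?mul1r ?mulN1r ?opprK. Qed.

Lemma sign_swap (R : pzRingType) (a b : nat) : a != b ->
  (-1) ^+ (a < b)%N = - (-1) ^+ (b < a)%N :> R.
Proof. by case: (ltngtP a b) => //= _ _; rewrite ?opprK. Qed.

Section FinsetFacts.
Variable T : finType.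
Implicit Types (a : T) (X Y R : {set T}).

Lemma setIU1_in a X Y : a \in X -> X :&: (a |: Y) = a |: (X :&: Y).
Proof. by move=> aX; apply/setP => x; rewrite !inE; case: eqP => // ->; rewrite aX. Qed.

Lemma setIU1_notin a X Y : a \notin X -> X :&: (a |: Y) = X :&: Y.
Proof. by move=> aX; apply/setP => x; rewrite !inE; case: eqP => // ->; rewrite (negbTE aX). Qed.

Lemma disjoint_setU X Y R :
  [disjoint X & R] -> [disjoint Y & R] -> [disjoint X :|: Y & R].
Proof. by rewrite -!setI_eq0 setIUl => /eqP-> /eqP->; rewrite setU0. Qed.

Lemma subU1_notin a X R : a \notin X ->
  (R \subset a |: X) && (a \notin R) = (R \subset X).
Proof.
move=> aX; apply/andP/idP => [[/subsetP sR aR]|sR].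
  apply/subsetP => x xR; have := sR x xR; rewrite in_setU1; case: eqP => // e.
  by move: aR; rewrite -e xR.
split; first by apply: (subset_trans sR); apply: subsetU1.
by apply: contra aX => /(subsetP sR).
Qed.

Lemma sum_subU1 (V : zmodType) a X (F : {set T} -> V) : a \notin X ->
  \sum_(R : {set T} | R \subset a |: X) F R =
  \sum_(R : {set T} | R \subset X) (F R + F (a |: R)).
Proof.
move=> aX; rewrite (bigID (fun R => a \in R)) /= big_split /= addrC; congr (_ + _).
  by apply: eq_bigl => R; rewrite subU1_notin.
rewrite (reindex_onto (fun R => a |: R) (fun R => R :\ a)) /=; last first.
  by move=> R /andP[_ aR]; rewrite setD1K.
apply: eq_bigl => R; rewrite setU11 andbT.
have [aR|aR] := boolP (a \in R).
  have -> : ((a |: R) :\ a == R) = false.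
    by apply/negbTE/negP => /eqP e; move: aR; rewrite -e !inE eqxx.
  rewrite andbF; apply/esym/negbTE/negP => /subsetP/(_ a aR).
  by rewrite (negbTE aX).
by rewrite setU1K // eqxx andbT subUset sub1set setU11 /= -(subU1_notin R aX) aR andbT.
Qed.

End FinsetFacts.

Section Exterior.
Variable n : nat.
Local Notation basis := 'I_(n + n).
Implicit Types (k l : basis) (A : {set basis}) (x y : ext n) (a c : algC)
  (I J K L R : {set 'I_n}) (o : 'I_n).

Lemma scA a c x : sc a (sc c x) = sc (a * c) x.
Proof. by apply/ffunP => B; rewrite !ffunE mulrA. Qed.
Lemma scDl a c x : sc (a + c) x = sc a x + sc c x.
Proof. by apply/ffunP => B; rewrite !ffunE mulrDl. Qed.
Lemma scDr a x y : sc a (x + y) = sc a x + sc a y.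
Proof. by apply/ffunP => B; rewrite !ffunE mulrDr. Qed.
Lemma sc1 x : sc 1 x = x.
Proof. by apply/ffunP => B; rewrite !ffunE mul1r. Qed.
Lemma sc0 x : sc 0 x = 0.
Proof. by apply/ffunP => B; rewrite !ffunE mul0r. Qed.
Lemma scr0 a : sc a (0 : ext n) = 0.
Proof. by apply/ffunP => B; rewrite !ffunE mulr0. Qed.
Lemma scNl a x : sc (- a) x = - sc a x.
Proof. by apply/ffunP => B; rewrite !ffunE mulNr. Qed.
Lemma sc_sumr a (I : finType) (P : pred I) (G : I -> ext n) :
  sc a (\sum_(i | P i) G i) = \sum_(i | P i) sc a (G i).
Proof. exact: (big_morph _ (@scDr a) (scr0 a)). Qed.

Definition linext (F : {set basis} -> ext n) x : ext n := \sum_A sc (x A) (F A).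

Lemma linext_mono F A : linext F (mono A) = F A.
Proof.
rewrite /linext (bigD1 A) //= big1 => [|B /negbTE nB]; rewrite ffunE ?eqxx ?nB.
  by rewrite sc1 addr0.
by rewrite sc0.
Qed.

Lemma linextD F x y : linext F (x + y) = linext F x + linext F y.
Proof. by rewrite /linext -big_split; apply: eq_bigr => B _; rewrite ffunE scDl. Qed.

Lemma linextZ F a x : linext F (sc a x) = sc a (linext F x).
Proof. by rewrite /linext sc_sumr; apply: eq_bigr => B _; rewrite ffunE scA. Qed.

Lemma linext0 F : linext F 0 = 0.
Proof. by rewrite /linext big1 // => B _; rewrite ffunE sc0. Qed.

Lemma linext_sum F (I : finType) (P : pred I) (G : I -> ext n) :
  linext F (\sum_(i | P i) G i) = \sum_(i | P i) linext F (G i).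
Proof. exact: (big_morph _ (@linextD F) (linext0 F)). Qed.

Lemma linext_scmono F a A : linext F (sc a (mono A)) = sc a (F A).
Proof. by rewrite linextZ linext_mono. Qed.

Lemma linext_addF F G x : linext (fun A => F A + G A) x = linext F x + linext G x.
Proof. by rewrite /linext -big_split; apply: eq_bigr => B _; rewrite scDr. Qed.

Lemma linext_anti F G :
  (forall A, linext F (G A) = - linext G (F A)) ->
  forall x, linext F (linext G x) = - linext G (linext F x).
Proof.
move=> FG x; rewrite [linext G x]/linext [linext F x]/linext !linext_sum -sumrN.
apply: eq_bigr => B _; rewrite !linextZ FG.
by apply/ffunP => C; rewrite !ffunE mulrN.
Qed.

(* Number of elements of A below k; the sign (-1)^(that number) is the sign
   produced by moving b_k across e_A to its place. *)
Definition nbelow A k := #|[set b in A | (val b < val k)%N]|.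
Definition sgn A k : algC := (-1) ^+ nbelow A k.

Definition cre k A : ext n := if k \in A then 0 else sc (sgn A k) (mono (k |: A)).
Definition ann k A : ext n :=
  if partner k \in A then sc (sgn A (partner k)) (mono (A :\ partner k)) else 0.

Lemma wedge_vecE k x : wedge (vec k) x = linext (cre k) x.
Proof.
rewrite /wedge (bigD1 [set k]) //= [X in _ + X]big1 => [|A nA]; last first.
  by apply: big1 => B _; rewrite /vec ffunE (negbTE nA) !mul0r sc0.
rewrite addr0 /linext; apply: eq_bigr => B _.
rewrite /vec ffunE eqxx mul1r /cre /wsign disjoints1.
have [kB|kB] /= := boolP (k \in B); first by rewrite mulr0 sc0 scr0.
rewrite -scA; congr (sc _ (sc _ _)); rewrite /sgn /nbelow; congr (_ ^+ _).
have -> : [set p in setX [set k] B | (val p.2 < val p.1)%N] =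
          (fun b => (k, b)) @: [set b in B | (val b < val k)%N].
  apply/setP => -[a b]; rewrite !inE /=; apply/idP/imsetP.
    by move=> /andP[/andP[/eqP -> bB] lt]; exists b; rewrite // inE bB.
  by move=> [c]; rewrite inE => /andP[cB lt] [-> ->]; rewrite eqxx cB lt.
by apply: card_imset => b c [].
Qed.

Lemma contrE k x : contr k x = linext (ann k) x.
Proof.
rewrite /contr /linext; apply: eq_bigr => A _; congr sc.
rewrite /ann /qb; case: ifP => pA.
  rewrite (bigD1 (partner k)) //= big1 => [|a /andP[aA na]].
    by rewrite eqxx mulr1 addr0.
  by rewrite eq_sym (negbTE na) mulr0 sc0.
apply: big1 => a aA; case: eqP => [e|]; last by rewrite mulr0 sc0.
by move: pA; rewrite e aA.
Qed.

Lemma psiE k x : psi k x = linext (fun A => cre k A + ann k A) x.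
Proof. by rewrite linext_addF /psi wedge_vecE contrE. Qed.

Lemma sgnU1 l k A : l \notin A -> sgn (l |: A) k = (-1) ^+ (val l < val k)%N * sgn A k.
Proof.
move=> lA; rewrite /sgn /nbelow -exprD; congr (_ ^+ _).
have [lk|kl] := ltnP l k.
  have -> : [set b in l |: A | (val b < val k)%N] = l |: [set b in A | (val b < val k)%N].
    by apply/setP => b; rewrite !inE; case: (eqVneq b l) => [->|].
  by rewrite cardsU1 inE (negbTE lA).
rewrite add0n; apply: eq_card => b; rewrite !inE.
by case: (eqVneq b l) => [->|] //=; rewrite (negbTE lA) ltnNge kl.
Qed.

Lemma sgnD1 l k A : l \in A -> sgn (A :\ l) k = (-1) ^+ (val l < val k)%N * sgn A k.
Proof. by move=> lA; rewrite -{2}(setD1K lA) sgnU1 ?signrMK // !inE eqxx. Qed.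

Lemma is_sign_sgn A k : is_sign (sgn A k).
Proof. exact: is_sign_exp. Qed.

Lemma cre_anti k l A : k != l ->
  linext (cre k) (cre l A) = - linext (cre l) (cre k A).
Proof.
move=> ne; rewrite [cre l A]/cre [cre k A]/cre.
case: (boolP (l \in A)) => lA; case: (boolP (k \in A)) => kA.
all: rewrite ?linext0 ?oppr0 ?linext_scmono //=.
all: rewrite /cre !in_setU1 ?(negbTE lA) ?(negbTE kA) ?lA ?kA ?orbT ?scr0 ?oppr0 //.
rewrite (negbTE ne) eq_sym (negbTE ne) /= !scA !sgnU1 // setUCA -scNl; congr sc.
rewrite (sign_swap _ ne) mulNr mulrN opprK mulrCA [RHS]mulrCA.
by congr (_ * _); rewrite mulrC.
Qed.

Lemma ann_anti k l A : partner k != partner l ->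
  linext (ann k) (ann l A) = - linext (ann l) (ann k A).
Proof.
move=> ne; rewrite [ann l A]/ann [ann k A]/ann.
case: (boolP (partner l \in A)) => lA; case: (boolP (partner k \in A)) => kA.
all: rewrite ?linext0 ?oppr0 ?linext_scmono //=.
all: rewrite /ann !in_setD1 ?(negbTE lA) ?(negbTE kA) ?lA ?kA ?andbF ?scr0 ?oppr0 //.
rewrite ne eq_sym ne /= !scA !sgnD1 // !setDDl setUC -scNl; congr sc.
rewrite (sign_swap _ ne) mulNr mulrN opprK mulrCA [RHS]mulrCA.
by congr (_ * _); rewrite mulrC.
Qed.

Lemma cre_ann_anti k l A : k != partner l ->
  linext (cre k) (ann l A) = - linext (ann l) (cre k A).
Proof.
move=> ne; rewrite [ann l A]/ann [cre k A]/cre.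
case: (boolP (partner l \in A)) => lA; case: (boolP (k \in A)) => kA.
all: rewrite ?linext0 ?oppr0 ?linext_scmono //=.
all: rewrite /cre /ann ?in_setD1 ?in_setU1 ?(negbTE lA) ?(negbTE kA) ?lA ?kA ?ne
       ?andbF ?andbT ?orbF ?scr0 ?oppr0 //.
all: rewrite ?(eq_sym (partner l)) ?(negbTE ne) ?scr0 ?oppr0 //=.
rewrite !scA sgnD1 // sgnU1 //.
have -> : (k |: A) :\ partner l = k |: (A :\ partner l).
  by apply/setP => x; rewrite !inE; case: (eqVneq x k) => [->|] //=; rewrite ne.
rewrite -scNl; congr sc.
rewrite (sign_swap _ ne) mulNr mulrN opprK mulrCA [RHS]mulrCA.
by congr (_ * _); rewrite mulrC.
Qed.

(* The hyperbolic plane <e_i, f_i> containing b_k: k is e_i or f_i, i = slot k. *)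
Definition slot k : nat := if (val k < n)%N then val k else (val k - n)%N.

Lemma slot_partner k : slot (partner k) = slot k.
Proof.
rewrite /partner /slot; case: (splitP k) => j hk /=.
  by rewrite ltnNge leq_addr /= addKn hk.
by rewrite ltn_ord hk addKn.
Qed.

Lemma slot_neq k l : slot k != slot l -> k != l.
Proof. by apply: contra => /eqP->. Qed.

Lemma psi_anti k l x : slot k != slot l -> psi k (psi l x) = - psi l (psi k x).
Proof.
move=> ne.
have kl : k != l by apply: slot_neq.
have pkl : partner k != partner l by apply: slot_neq; rewrite !slot_partner.
have kpl : k != partner l by apply: slot_neq; rewrite slot_partner.
have lpk : l != partner k by apply: slot_neq; rewrite slot_partner eq_sym.
rewrite !psiE !linext_addF !linextD.
rewrite (linext_anti (fun A => cre_anti A kl)) (linext_anti (fun A => ann_anti A pkl)).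
rewrite (linext_anti (fun A => cre_ann_anti A kpl)).
have -> : linext (ann k) (linext (cre l) x) = - linext (cre l) (linext (ann k) x).
  by rewrite (linext_anti (fun A => cre_ann_anti A lpk)) opprK.
by rewrite !opprD addrACA.
Qed.

Lemma psiD k x y : psi k (x + y) = psi k x + psi k y.
Proof. by rewrite !psiE linextD. Qed.
Lemma psiZ k a x : psi k (sc a x) = sc a (psi k x).
Proof. by rewrite !psiE linextZ. Qed.
Lemma psi0 k : psi k (0 : ext n) = 0.
Proof. by rewrite psiE linext0. Qed.

Lemma psi_seqD s x y : psi_seq s (x + y) = psi_seq s x + psi_seq s y.
Proof. by elim: s => //= k s IH; rewrite IH psiD. Qed.
Lemma psi_seqZ s a x : psi_seq s (sc a x) = sc a (psi_seq s x).
Proof. by elim: s => //= k s IH; rewrite IH psiZ. Qed.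
Lemma psi_seq0 s : psi_seq s (0 : ext n) = 0.
Proof. by elim: s => //= k s IH; rewrite IH psi0. Qed.
Lemma psi_seq_sum s (I : finType) (P : pred I) (G : I -> ext n) :
  psi_seq s (\sum_(i | P i) G i) = \sum_(i | P i) psi_seq s (G i).
Proof. exact: (big_morph _ (@psi_seqD s) (@psi_seq0 s)). Qed.
Lemma psi_seq_cat s1 s2 x : psi_seq (s1 ++ s2) x = psi_seq s1 (psi_seq s2 x).
Proof. by rewrite /psi_seq foldr_cat. Qed.

Lemma psi_comm k u y : all (fun l => slot l != slot k) u ->
  psi k (psi_seq u y) = sc ((-1) ^+ size u) (psi_seq u (psi k y)).
Proof.
elim: u => [|l u IH] /=; first by rewrite expr0 sc1.
move=> /andP[nl hu]; rewrite psi_anti 1?eq_sym // IH // psiZ -scNl.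
by rewrite exprS mulN1r.
Qed.

Lemma reorder i s x : exists t : nat,
  psi_seq s x = sc ((-1) ^+ t)
    (psi_seq ([seq k <- s | slot k == i] ++ [seq k <- s | slot k != i]) x).
Proof.
elim: s => [|k s [t IH]] /=; first by exists 0%N; rewrite expr0 sc1.
have [hk|hk] /= := eqVneq (slot k) i; first by exists t; rewrite IH psiZ.
exists (t + size [seq k <- s | slot k == i])%N.
rewrite IH psiZ !psi_seq_cat psi_comm; last first.
  by apply/allP => l; rewrite mem_filter => /andP[/eqP-> _]; rewrite eq_sym.
by rewrite scA exprD.
Qed.

Lemma psi_free k A : k \notin A -> partner k \notin A ->
  psi k (mono A) = sc (sgn A k) (mono (k |: A)).
Proof.
by move=> kA pA; rewrite psiE linext_mono /cre /ann (negbTE kA) (negbTE pA) addr0.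
Qed.

Lemma psi_pair k l A :
  partner k = l -> partner l = k -> k != l -> k \notin A -> l \notin A ->
  psi k (psi l (mono A)) =
  sc (sgn A l * sgn (l |: A) k) (mono (k |: (l |: A))) + mono A.
Proof.
move=> pk pl kl kA lA.
rewrite psi_free ?pl // psiZ psiE linext_mono /cre /ann pk !in_setU1 eqxx.
rewrite (negbTE kl) (negbTE kA) /= scDr scA setU1K // [sgn (l |: A) l]sgnU1 //.
by rewrite ltnn expr0 mul1r scA (is_signK (is_sign_sgn _ _)) sc1.
Qed.

Lemma psi_triple e f A :
  partner e = f -> partner f = e -> e != f -> e \notin A -> f \notin A ->
  psi e (psi f (psi e (mono A))) = sc (2 * sgn A e) (mono (e |: A)).
Proof.
move=> pe pf ef eA fA.
have fe : f != e by rewrite eq_sym.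
rewrite psi_pair // psiD psiZ psiE linext_mono /cre /ann pe !in_setU1 !eqxx orbT /=.
rewrite add0r scA setU1K ?in_setU1 ?(negbTE fe) //.
rewrite psi_free ?pe // [sgn (f |: _) f]sgnU1 ?in_setU1 ?(negbTE fe) // ltnn expr0 mul1r.
rewrite -mulrA (is_signK (is_sign_sgn _ _)) mulr1 -scDl.
by congr sc; rewrite mulrDl mul1r.
Qed.

Lemma slot_e (i : 'I_n) : slot (eidx i) = i.
Proof. by rewrite /slot /eidx /= ltn_ord. Qed.
Lemma slot_f (i : 'I_n) : slot (fidx i) = i.
Proof. by rewrite /slot /fidx /= ltnNge leq_addr /= addKn. Qed.
Lemma slot_lt k : (slot k < n)%N.
Proof. by rewrite /slot; case: ifP => // h; rewrite ltn_subLR ?ltn_ord // leqNgt h. Qed.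
Lemma partner_e (i : 'I_n) : partner (eidx i) = fidx i.
Proof. by rewrite /partner /eidx -[lshift n i]/(unsplit (inl i)) unsplitK. Qed.
Lemma partner_f (i : 'I_n) : partner (fidx i) = eidx i.
Proof. by rewrite /partner /fidx -[rshift n i]/(unsplit (inr i)) unsplitK. Qed.
Lemma e_neq_f (i j : 'I_n) : eidx i != fidx j.
Proof. by rewrite /eidx /fidx eq_lrshift. Qed.

Definition beta_word (I J : {set 'I_n}) : seq basis :=
  map (@eidx n) (enum I) ++ map (@fidx n) (enum [set: 'I_n]) ++ rev (map (@eidx n) (enum J)).

Lemma beta_wordE I J : beta_e I J = psi_seq (beta_word I J) (one_ext n).
Proof. by rewrite /beta_e /beta_word !psi_seq_cat. Qed.

Lemma filter_enum1 (A : {set 'I_n}) (o : 'I_n) :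
  [seq i <- enum A | val i == val o] = if o \in A then [:: o] else [::].
Proof.
rewrite (@eq_filter _ _ (pred1 o)) //; case: ifP => h.
  by apply: filter_pred1_uniq; rewrite ?enum_uniq ?mem_enum.
apply/eqP; rewrite -size_eq0 size_filter.
by rewrite (count_uniq_mem o (enum_uniq (mem A))) mem_enum h.
Qed.

Lemma block_word I J (o : 'I_n) :
  [seq k <- beta_word I J | slot k == val o] =
  (if o \in I then [:: eidx o] else [::]) ++ fidx o ::
  (if o \in J then [:: eidx o] else [::]).
Proof.
rewrite /beta_word !filter_cat filter_rev !filter_map.
rewrite !(@eq_filter _ _ (fun i : 'I_n => val i == val o)) => [|i|i|i];
  rewrite /= ?slot_e ?slot_f //.
by rewrite !filter_enum1 inE; case: (o \in I); case: (o \in J).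
Qed.

(* Indices below m, the symmetric difference, and the monomial
   e_(K u R) /\ f_(L u R) with K = I n J and L = I^c n J^c cut below m. *)
Definition lowset m : {set 'I_n} := [set i : 'I_n | (val i < m)%N].
Definition symdiff (I J : {set 'I_n}) := (I :\: J) :|: (J :\: I).
Definition gmon (I J : {set 'I_n}) m (R : {set 'I_n}) : {set basis} :=
  (@eidx n @: ((I :&: J) :&: lowset m :|: R)) :|:
  (@fidx n @: ((~: I :&: ~: J) :&: lowset m :|: R)).

Definition partial_form (I J : {set 'I_n}) m x :=
  exists eps : {set 'I_n} -> algC, (forall R, is_sign (eps R)) /\
  x = sc (2 ^+ #|(I :&: J) :&: lowset m|)
        (\sum_(R : {set 'I_n} | R \subset symdiff I J :&: lowset m)
           sc (eps R) (mono (gmon I J m R))).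

Lemma lowsetS (o : 'I_n) : lowset (val o).+1 = o |: lowset (val o).
Proof. by apply/setP => i; rewrite !inE ltnS leq_eqVlt. Qed.

Lemma notin_lowset_self o : o \notin lowset (val o).
Proof. by rewrite inE ltnn. Qed.

Lemma notin_lowset (X : {set 'I_n}) o : o \notin X :&: lowset (val o).
Proof. by rewrite in_setI (negbTE (notin_lowset_self o)) andbF. Qed.

Lemma subset_lowset I J (o : 'I_n) (R : {set 'I_n}) :
  R \subset symdiff I J :&: lowset (val o) -> R \subset lowset (val o).
Proof. by move=> hR; apply: (subset_trans hR); apply: subsetIr. Qed.

Lemma gmon_free I J (o : 'I_n) R : R \subset lowset (val o) ->
  (eidx o \notin gmon I J (val o) R) && (fidx o \notin gmon I J (val o) R).
Proof.
move=> hR.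
have oX X : o \notin X :&: lowset (val o) :|: R.
  rewrite in_setU (negbTE (notin_lowset _ _)) /=.
  by apply: contra (notin_lowset_self o) => /(subsetP hR).
rewrite /gmon !in_setU !mem_imset; try by [apply: lshift_inj|apply: rshift_inj].
rewrite !(negbTE (oX _)) ?orbF /=.
apply/andP; split; apply/negP => /imsetP[j _ h].
  by move: (e_neq_f o j); rewrite h eqxx.
by move: (e_neq_f j o); rewrite h eqxx.
Qed.

Lemma gmon_both I J (o : 'I_n) R : o \in I -> o \in J ->
  gmon I J (val o).+1 R = eidx o |: gmon I J (val o) R.
Proof.
move=> oI oJ; rewrite /gmon lowsetS setIU1_in ?inE ?oI ?oJ //.
by rewrite setIU1_notin ?inE ?oI // -setUA imsetU1 setUA.
Qed.

Lemma gmon_neither I J (o : 'I_n) R : o \notin I -> o \notin J ->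
  gmon I J (val o).+1 R = fidx o |: gmon I J (val o) R.
Proof.
move=> oI oJ; rewrite /gmon lowsetS [(~: I :&: ~: J) :&: _]setIU1_in ?inE ?oI ?oJ //.
by rewrite setIU1_notin ?inE ?(negbTE oI) // -setUA imsetU1 setUCA.
Qed.

Lemma gmon_one I J (o : 'I_n) R : (o \in I) (+) (o \in J) ->
  gmon I J (val o).+1 R = gmon I J (val o) R /\
  gmon I J (val o).+1 (o |: R) = eidx o |: (fidx o |: gmon I J (val o) R).
Proof.
move=> h; have [oK oL] : o \notin I :&: J /\ o \notin ~: I :&: ~: J.
  by move: h; rewrite !inE; case: (o \in I); case: (o \in J).
rewrite /gmon lowsetS !setIU1_notin //; split=> //.
rewrite (setUCA _ [set o] R) (setUCA _ [set o] R) !imsetU1.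
by apply/setP => x; rewrite !inE; case: (x == eidx o); case: (x == fidx o); rewrite ?orbT.
Qed.

Lemma partial_form_sign I J m x t :
  partial_form I J m x -> partial_form I J m (sc ((-1) ^+ t) x).
Proof.
move=> [eps [He ->]]; exists (fun R => (-1) ^+ t * eps R); split.
  by move=> R; apply: is_signM; [apply: is_sign_exp|apply: He].
rewrite scA mulrC -scA sc_sumr; congr sc; apply: eq_bigr => R _.
by rewrite scA.
Qed.

Lemma step_both I J (o : 'I_n) y : o \in I -> o \in J ->
  partial_form I J (val o) y ->
  partial_form I J (val o).+1 (psi (eidx o) (psi (fidx o) (psi (eidx o) y))).
Proof.
move=> oI oJ [eps [He ->]].
exists (fun R => eps R * sgn (gmon I J (val o) R) (eidx o)); split.
  by move=> R; apply: is_signM; [apply: He|apply: is_sign_sgn].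
have -> : symdiff I J :&: lowset (val o).+1 = symdiff I J :&: lowset (val o).
  by rewrite lowsetS setIU1_notin // !inE oI oJ.
have -> : (I :&: J) :&: lowset (val o).+1 = o |: ((I :&: J) :&: lowset (val o)).
  by rewrite lowsetS setIU1_in // inE oI oJ.
rewrite cardsU1 notin_lowset add1n exprS mulrC -scA !psiZ; congr sc.
rewrite sc_sumr; rewrite -[psi _ (psi _ (psi _ _))]/(psi_seq [:: _; _; _] _).
rewrite psi_seq_sum; apply: eq_bigr => R hR.
have /andP[eG fG] := gmon_free I J (subset_lowset hR).
rewrite psi_seqZ /= psi_triple ?partner_e ?partner_f ?e_neq_f // gmon_both // !scA.
by congr sc; rewrite mulrCA.
Qed.

Lemma step_neither I J (o : 'I_n) y : o \notin I -> o \notin J ->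
  partial_form I J (val o) y -> partial_form I J (val o).+1 (psi (fidx o) y).
Proof.
move=> oI oJ [eps [He ->]].
exists (fun R => eps R * sgn (gmon I J (val o) R) (fidx o)); split.
  by move=> R; apply: is_signM; [apply: He|apply: is_sign_sgn].
rewrite lowsetS !setIU1_notin ?inE ?(negbTE oI) ?(negbTE oJ) // psiZ; congr sc.
rewrite -[psi _ _]/(psi_seq [:: _] _) psi_seq_sum; apply: eq_bigr => R hR.
have /andP[eG fG] := gmon_free I J (subset_lowset hR).
by rewrite psi_seqZ /= psi_free ?partner_f // gmon_neither // scA.
Qed.

(* Plane o with o in exactly one of I, J: the block e_o f_o (or f_o e_o)
   keeps each term and adds one containing e_o /\ f_o, i.e. R grows by o. *)
Lemma step_one I J (o : 'I_n) y k l : (o \in I) (+) (o \in J) ->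
  ((k == eidx o) && (l == fidx o)) || ((k == fidx o) && (l == eidx o)) ->
  partial_form I J (val o) y -> partial_form I J (val o).+1 (psi k (psi l y)).
Proof.
move=> hx hkl [eps [He ->]].
have [pk [pl kl]] : partner k = l /\ partner l = k /\ k != l.
  by case/orP: hkl => /andP[/eqP-> /eqP->];
     rewrite ?partner_e ?partner_f ?e_neq_f // eq_sym e_neq_f.
pose s R := sgn (gmon I J (val o) R) l * sgn (l |: gmon I J (val o) R) k.
exists (fun R => if o \in R then eps (R :\ o) * s (R :\ o) else eps R); split.
  by move=> R; case: ifP => _ //; apply: is_signM => //; apply: is_signM; apply: is_sign_sgn.
have [oK oS] : o \notin I :&: J /\ o \in symdiff I J.
  by move: hx; rewrite !inE; case: (o \in I); case: (o \in J).
rewrite lowsetS setIU1_notin // setIU1_in // !psiZ sum_subU1 ?notin_lowset //; congr sc.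
rewrite -[psi _ (psi _ _)]/(psi_seq [:: _; _] _) psi_seq_sum; apply: eq_bigr => R hR.
have /andP[eG fG] := gmon_free I J (subset_lowset hR).
have oR : o \notin R.
  by apply: contra (notin_lowset_self o) => /(subsetP (subset_lowset hR)).
have [kG lG] : k \notin gmon I J (val o) R /\ l \notin gmon I J (val o) R.
  by case/orP: hkl => /andP[/eqP-> /eqP->].
have [-> ->] := gmon_one R hx.
rewrite (negbTE oR) setU11 setU1K // psi_seqZ /= psi_pair // scDr !scA addrC /s.
by case/orP: hkl => /andP[/eqP-> /eqP->] //; rewrite setUCA.
Qed.

Lemma partial_form0 I J : partial_form I J 0 (one_ext n).
Proof.
exists (fun _ => 1); split=> [R|]; first by left.
have low0 : lowset 0 = set0 by apply/setP => i; rewrite !inE.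
rewrite low0 !setI0 cards0 expr0 sc1 (big_pred1 set0) => [|R]; last by rewrite subset0.
by rewrite sc1 /gmon low0 !setI0 !setU0 !imset0 setU0.
Qed.

Lemma partial_form_prefix I J m : (m <= n)%N ->
  partial_form I J m (psi_seq [seq k <- beta_word I J | (slot k < m)%N] (one_ext n)).
Proof.
elim: m => [_|m IH mn].
  have -> : [seq k <- beta_word I J | (slot k < 0)%N] = [::].
    by elim: (beta_word I J) => //= k s ->; rewrite ltn0.
  exact: partial_form0.
pose o := Ordinal mn.
have [t ->] := reorder m [seq k <- beta_word I J | (slot k < m.+1)%N] (one_ext n).
apply: partial_form_sign; rewrite psi_seq_cat -!filter_predI.
have -> : [seq k <- beta_word I J | predI (fun k => slot k != m) (fun k => slot k < m.+1)%N k]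
          = [seq k <- beta_word I J | (slot k < m)%N].
  by apply: eq_filter => k /=; rewrite ltnS ltn_neqAle.
have -> : [seq k <- beta_word I J | predI (fun k => slot k == m) (fun k => slot k < m.+1)%N k]
          = [seq k <- beta_word I J | slot k == val o].
  by apply: eq_filter => k /=; case: eqP => // ->; rewrite ltnSn.
have IHm := IH (ltnW mn); rewrite block_word.
case oI: (o \in I); case oJ: (o \in J) => /=.
- by apply: step_both; rewrite ?oI ?oJ.
- by apply: (step_one (o := o)); rewrite ?oI ?oJ ?eqxx.
- by apply: (step_one (o := o)); rewrite ?oI ?oJ ?eqxx ?orbT.
- by apply: step_neither; rewrite ?oI ?oJ.
Qed.

Lemma wedge_mono a A (B : {set basis}) :
  wedge (sc a (mono A)) (mono B) = sc (a * wsign A B) (mono (A :|: B)).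
Proof.
rewrite /wedge (bigD1 A) //= [X in _ + X]big1 => [|A' nA]; last first.
  by apply: big1 => B' _; rewrite !ffunE (negbTE nA) mulr0 !mul0r sc0.
rewrite addr0 (bigD1 B) //= big1 => [|B' nB]; last first.
  by rewrite !ffunE (negbTE nB) mulr0 mul0r sc0.
by rewrite !ffunE !eqxx !mulr1 addr0.
Qed.

Lemma is_sign_wsign A (B : {set basis}) : [disjoint A & B] -> is_sign (wsign A B).
Proof. by move=> h; rewrite /wsign h; apply: is_sign_exp. Qed.

Lemma disjoint_ef (X Y : {set 'I_n}) : [disjoint @eidx n @: X & @fidx n @: Y].
Proof.
rewrite -setI_eq0; apply/eqP/setP => x; rewrite !inE.
apply/negP => /andP[/imsetP[i _ ->] /imsetP[j _ /eqP]].
by rewrite (negbTE (e_neq_f i j)).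
Qed.

Definition chain_sign (K L R : {set 'I_n}) : algC :=
  wsign (@eidx n @: K) (@eidx n @: R) *
  wsign (@eidx n @: K :|: @eidx n @: R) (@fidx n @: L) *
  wsign (@eidx n @: K :|: @eidx n @: R :|: @fidx n @: L) (@fidx n @: R).

Lemma wedge_chain K L R :
  wedge (wedge (wedge (eS K) (eS R)) (fS L)) (fS R) =
  sc (chain_sign K L R) (mono (@eidx n @: (K :|: R) :|: @fidx n @: (L :|: R))).
Proof.
rewrite /eS /fS -[mono (@eidx n @: K)]sc1 !wedge_mono mul1r.
by rewrite !imsetU [in RHS]setUA.
Qed.

Lemma is_sign_chain K L R : [disjoint K & R] -> [disjoint L & R] ->
  is_sign (chain_sign K L R).
Proof.
move=> dK dL; apply: is_signM; first apply: is_signM; apply: is_sign_wsign.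
- by rewrite imset_disjoint //; apply: lshift_inj.
- by apply: disjoint_setU; apply: disjoint_ef.
- apply: disjoint_setU; first by apply: disjoint_setU; apply: disjoint_ef.
  by rewrite imset_disjoint //; apply: rshift_inj.
Qed.

End Exterior.

Unset Implicit Arguments.

Theorem mainTheorem2 (n : nat) (I J : {set 'I_n}) :
  exists eps : {set 'I_n} -> algC,
    (forall R : {set 'I_n}, R \subset (I :\: J) :|: (J :\: I) ->
       eps R = 1 \/ eps R = -1) /\
    beta_e I J =
      sc ((2 : algC) ^+ #|I :&: J|)
        (\sum_(R : {set 'I_n} | R \subset (I :\: J) :|: (J :\: I))
          sc (eps R) (wedge (wedge (wedge (eS (I :&: J)) (eS R))
                                (fS (~: I :&: ~: J))) (fS R))).
Proof.
have [eps [He Hbeta]] := partial_form_prefix I J (leqnn n).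
have lowT : lowset n n = setT by apply/setP => i; rewrite !inE ltn_ord.
have word_all : [seq k <- beta_word I J | (slot k < n)%N] = beta_word I J.
  by apply/all_filterP/allP => k _; apply: slot_lt.
rewrite word_all -beta_wordE /gmon lowT !setIT in Hbeta.
pose K := I :&: J; pose L := ~: I :&: ~: J.
have signR (R : {set 'I_n}) : R \subset symdiff I J -> is_sign (chain_sign K L R).
  move=> hR; apply: is_sign_chain; apply: (disjointWr hR);
    by rewrite -setI_eq0; apply/eqP/setP => i; rewrite !inE; case: (i \in I); case: (i \in J).
exists (fun R => eps R * chain_sign K L R); split.
  by move=> R hR; apply: is_signM; [apply: He|apply: signR].
rewrite Hbeta; congr sc; apply: eq_bigr => R hR.
by rewrite wedge_chain scA -mulrA is_signK ?mulr1 //; apply: signR.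
Qed.
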